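(* Let $G=(g_{uv})_{1\le u,v\le m}$ be a symmetric complex matrix with units on the diagonal with $\mathrm{rank}\,G\le 2r$ for an integer $r$, let $0<\varkappa<1$, and suppose that for any $u,v\in[m]$ either $|g_{uv}-1|>\varkappa$ or $|g_{uv}-1|<2^{-4(r+1)}\varkappa$. Let $\mathcal K=\mathcal K(G,\varkappa)$ and let $\succ$ be any ordering of $\mathcal K$ produced by the construction in the context. Then for any two simplices $\sigma,\tau\in\mathcal K$ with $\dim\sigma=\dim\tau=r$ and $\mu(\sigma)=\mu(\tau)$, we have $\sigma\cup\tau\in\mathcal K$.
   Context: $[m]=\{1,\dots,m\}$; $\Gamma(G,\varkappa)$ is the graph on $[m]$ with $\{u,v\}$ an edge iff $|g_{uv}-1|<\varkappa$; $\mathcal K(G,\varkappa)$ is its clique complex; $\dim\sigma=|\sigma|-1$. For a strict total ordering $\succ$ of $\mathcal K$ and non-empty $\sigma$, $\mu(\sigma)$ is the $\succ$-largest facet of $\sigma$. Construction of $\succ$: simplices of larger dimension are larger; vertices are ordered arbitrarily; assuming $\succ$ is defined on $(s-1)$-simplices, for $s$-simplices put $\sigma\succ\tau$ if $\mu(\sigma)\succ\mu(\tau)$; for each $(s-1)$-simplex $\rho$, let $\mathbb V_\rho$ be the set of vertices $v\notin\rho$ with $\rho\cup\{v\}\in\mathcal K$ and $\mu(\rho\cup\{v\})=\rho$, $t=|\mathbb V_\rho|$; choose $v_1,\dots,v_t$ successively: for $j<t$, among pairs $w\ne z$ in $\mathbb V_\rho\setminus\{v_1,\dots,v_{j-1}\}$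 pick a pair $(w^0,z^0)$ maximizing $|g_{wz}-1|$ (ties broken arbitrarily) and set $v_j=w^0$; $v_t$ is the remaining vertex; then put $\rho\cup\{v_1\}\succ\dots\succ\rho\cup\{v_t\}$. *)

From HB Require Import structures.
From mathcomp Require Import all_boot all_order all_algebra.
From mathcomp Require Import reals.
From mathcomp Require Import complex.
Set Implicit Arguments. Unset Strict Implicit. Unset Printing Implicit Defensive.
Import Order.TTheory GRing.Theory Num.Theory.
Local Open Scope ring_scope.

Section Defs.
Variables (R : realType) (m : nat).
Local Notation C := (R[i]).

Definition cabs (z : C) : R := ComplexField.Normc.normc z.

Definition dist1 (G : 'M[C]_m) (u v : 'I_m) : R := cabs (G u v - 1).

(* Simplices of the clique complex K(G, kappa) of the graph Gamma(G, kappa):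
   non-empty sets of vertices that are pairwise adjacent. *)
Definition inK (G : 'M[C]_m) (kappa : R) (s : {set 'I_m}) : bool :=
  (s != set0) &&
  [forall u in s, forall v in s, (u != v) ==> (dist1 G u v < kappa)].

Definition facets (s : {set 'I_m}) : {set {set 'I_m}} := [set s :\ v | v in s].

(* mu(s): the ord-largest facet of s ([ord a b] means a ≻ b). *)
Definition mu (ord : rel {set 'I_m}) (s : {set 'I_m}) : {set 'I_m} :=
  odflt set0 [pick r in facets s |
               [forall r' in facets s, (r' == r) || ord r r']].

Definition Vset (G : 'M[C]_m) (kappa : R) (ord : rel {set 'I_m})
    (rho : {set 'I_m}) : {set 'I_m} :=
  [set v | (v \notin rho) && inK G kappa (v |: rho) && (mu ord (v |: rho) == rho)].

Definition constructed_order (G : 'M[C]_m) (kappa : R) (ord : rel {set 'I_m}) : Prop :=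
  (forall s, inK G kappa s -> ~~ ord s s) /\
      (forall s t u, inK G kappa s -> inK G kappa t -> inK G kappa u ->
                     ord s t -> ord t u -> ord s u) /\
      (forall s t, inK G kappa s -> inK G kappa t -> s != t -> ord s t || ord t s) /\
      (forall s t, inK G kappa s -> inK G kappa t -> (#|t| < #|s|)%N -> ord s t) /\
      (forall s t, inK G kappa s -> inK G kappa t -> #|s| = #|t| -> (1 < #|s|)%N ->
                   ord (mu ord s) (mu ord t) -> ord s t) /\
  (* within the block of rho, the order rho+v_1 ≻ ... ≻ rho+v_t follows the
     greedy choice: v_j is an endpoint w^0 of a pair (w^0,z^0) of distinct
     remaining vertices maximizing |g_wz - 1|, whenever at least two vertices
     remain (j < t). *)
      (forall rho v, inK G kappa rho -> v \in Vset G kappa ord rho ->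
         let Rv := [set w in Vset G kappa ord rho | ~~ ord (w |: rho) (v |: rho)] in
         (1 < #|Rv|)%N ->
         exists2 z, z \in Rv & (z != v) /\
           (forall w z', w \in Rv -> z' \in Rv -> w != z' ->
                         dist1 G w z' <= dist1 G v z)).

End Defs.

(* Write sigma = v + rho and tau = w + rho with rho = mu(sigma) = mu(tau); we
   must show that v and w are adjacent.  By the gap hypothesis any two vertices
   of a simplex are delta-close, delta = kappa 2^-4(r+1).  Suppose
   |g_vw - 1| > kappa and, say, sigma is above tau.  Peeling sigma with mu gives
   faces {x0} = F_0 < F_1 < ... < F_r = sigma with F_(i+1) = x_i + F_i.  The
   construction of the order keeps v and w among the vertices ranked at or below
   x_i in the block of F_i, so the greedy rule supplies a z_i there whose
   distance c_i to x_i is maximal in that block; in particular c_i > kappa.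
   The 2r+1 rows x0, x_i, z_i of G are then almost triangular: the entries among
   x0 and the x_j, and between z_i and the earlier x_j, are delta-close to 1,
   while g(x_i, z_i) is far from 1 and dominates the entries of z_i against
   later rows.  Evaluating a vanishing combination of these rows at the columns
   x_j and z_j bounds each coefficient by the earlier (resp. later) ones, and
   the resulting geometric bounds force all coefficients to vanish because
   2^(2r+3) delta < kappa.  Hence rank G > 2r, a contradiction. *)

From HB Require Import structures.
From mathcomp Require Import all_boot all_order all_algebra.
From mathcomp Require Import reals.
From mathcomp Require Import complex.
From mathcomp Require Import ring lra zify.
Set Implicit Arguments. Unset Strict Implicit. Unset Printing Implicit Defensive.
Import Order.TTheory GRing.Theory Num.Theory.
Local Open Scope ring_scope.

Section ComplexModulus.
Variable R : realType.
Implicit Types x y : R[i].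

Lemma cabs_ge0 x : 0 <= cabs x.
Proof. by case: x => a b; rewrite /cabs sqrtr_ge0. Qed.

Lemma cabs0 : cabs (0 : R[i]) = 0.
Proof. exact: ComplexField.Normc.normc0. Qed.

Lemma cabs_eq0 x : cabs x = 0 -> x = 0.
Proof. exact: ComplexField.Normc.eq0_normc. Qed.

Lemma cabsN x : cabs (- x) = cabs x.
Proof. exact: normcN. Qed.

Lemma cabsM x y : cabs (x * y) = cabs x * cabs y.
Proof. exact: ComplexField.Normc.normcM. Qed.

Lemma cabsD x y : cabs (x + y) <= cabs x + cabs y.
Proof. exact: le_normcD. Qed.

Lemma cabs_sum_le (I : eqType) (s : seq I) (P : pred I) (F : I -> R[i]) (g : I -> R) :
  (forall i, i \in s -> P i -> cabs (F i) <= g i) ->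
  cabs (\sum_(i <- s | P i) F i) <= \sum_(i <- s | P i) g i.
Proof.
move=> Fg; rewrite big_seq_cond [X in _ <= X]big_seq_cond.
apply: (big_rec2 (fun z t => cabs z <= t)) => [|i z t /andP[si Pi] h].
  by rewrite cabs0.
exact: le_trans (cabsD _ z) (lerD (Fg i si Pi) h).
Qed.

Lemma dist1_diag (m : nat) (G : 'M[R[i]]_m) p : G p p = 1 -> dist1 G p p = 0.
Proof. by move=> Gpp; rewrite /dist1 Gpp subrr cabs0. Qed.

End ComplexModulus.

Lemma fin_all_exists_ltn (T : finType) (x0 : T) (P : nat -> pred T) n :
  (forall i, (i < n)%N -> exists x, P i x) ->
  exists f : nat -> T, forall i, (i < n)%N -> P i (f i).
Proof.
move=> exP; exists (fun i => odflt x0 [pick x | P i x]) => i /exP[x Px].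
by case: pickP => [y // | /(_ x)]; rewrite Px.
Qed.

Lemma ex_max_seq (T : eqType) (P : pred T) (lt : rel T) (s : seq T) :
  (forall x y z, P x -> P y -> P z -> lt x y -> lt y z -> lt x z) ->
  (forall x y, P x -> P y -> x != y -> lt x y || lt y x) ->
  s != [::] -> all P s ->
  exists2 x, x \in s & forall y, y \in s -> (y == x) || lt x y.
Proof.
move=> lt_trans lt_total; elim: s => [//|x s IH] _ /andP[Px Ps].
have [-> | s_neq0] := eqVneq s [::].
  by exists x; rewrite ?mem_head // => y; rewrite inE => ->.
have [y ys y_max] := IH s_neq0 Ps; have Py := allP Ps y ys.
have [-> | xy] := eqVneq x y.
  by exists y; rewrite ?mem_head // => z; rewrite inE => /orP[-> // | /y_max].
case/orP: (lt_total x y Px Py xy) => [lt_xy | lt_yx].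
  exists x; rewrite ?mem_head // => z; rewrite inE => /orP[-> // | zs].
  case/orP: (y_max z zs) => [/eqP-> | lt_yz]; first by rewrite lt_xy orbT.
  by rewrite (lt_trans x y z) ?orbT // (allP Ps).
exists y; rewrite ?inE ?ys ?orbT // => z; rewrite inE => /orP[/eqP-> | /y_max //].
by rewrite lt_yx orbT.
Qed.

Section GeometricGrowth.
Variables (R : realDomainType) (u : nat -> R) (A : R) (n : nat).

Lemma sum_le_geometric :
  (forall j, (j < n)%N -> u j <= A + \sum_(0 <= i < j) u i) ->
  \sum_(0 <= i < n) u i <= (2 ^+ n - 1) * A.
Proof.
elim: n => [|k IH] hu; first by rewrite big_geq // subrr mul0r.
rewrite big_nat_recr //= exprS.
have := hu k (ltnSn k); have := IH (fun j hj => hu j (ltnW hj)).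
set S := \sum_(0 <= i < k) u i; set p := 2 ^+ k; lra.
Qed.

Lemma sum_le_geometric_rev :
  (forall j, (j < n)%N -> u j <= A + \sum_(j.+1 <= i < n) u i) ->
  \sum_(0 <= i < n) u i <= (2 ^+ n - 1) * A.
Proof.
move=> hu; suff tail k : (k <= n)%N -> \sum_(n - k <= i < n) u i <= (2 ^+ k - 1) * A.
  by have := tail n (leqnn n); rewrite subnn.
elim: k => [_|k IH lt_kn]; first by rewrite subn0 big_geq // subrr mul0r.
have lt_n : (n - k.+1 < n)%N by lia.
rewrite (big_ltn lt_n) exprS.
have := hu _ lt_n; have := IH (ltnW lt_kn); rewrite -subSn // subSS.
set S := \sum_(n - k <= i < n) u i; set p := 2 ^+ k; lra.
Qed.

End GeometricGrowth.

Lemma rows_dependent (F : fieldType) (m n : nat) (G : 'M[F]_m) (f : nat -> 'I_m) :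
  (\rank G < n)%N ->
  exists2 y : nat -> F, (exists2 k, (k < n)%N & y k != 0) &
    forall q, \sum_(0 <= k < n) y k * G (f k) q = 0.
Proof.
move=> rkG; pose M := rowsub (fun k : 'I_n => f k) G.
have : kermx M != 0.
  rewrite -mxrank_eq0 mxrank_ker -lt0n subn_gt0.
  by rewrite /M rowsubE (leq_ltn_trans (mxrankM_maxr _ _)).
case/rowV0Pn => v /sub_kermxP vM v0.
exists (fun k => if insub k is Some j then v 0 j else 0).
  have [k vk] : exists k, v 0 k != 0.
    apply/existsP; apply: contraNT v0; rewrite negb_exists => /forallP v0.
    by apply/eqP/rowP => k; rewrite mxE; apply/eqP/negPn.
  by exists k; rewrite ?ltn_ord ?valK.
move=> q; rewrite big_mkord.
transitivity ((v *m M) 0 q); last by rewrite vM mxE.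
by rewrite mxE; apply: eq_bigr => k _; rewrite valK mxE.
Qed.

Lemma sum_split3 (V : nmodType) (r : nat) (F : nat -> V) :
  \sum_(0 <= k < 1 + r + r) F k =
  F 0%N + \sum_(0 <= i < r) F i.+1 + \sum_(0 <= i < r) F (r + i).+1.
Proof.
rewrite (big_cat_nat (n := r.+1)) ?leq_addr //= big_nat_recl //.
rewrite -[in X in _ + X](add0n r.+1) big_addn add1n subSS addnK.
by congr (_ + _); apply: eq_bigr => i _; rewrite addnS addnC.
Qed.

(* The rows x0, x_i, z_i of the sketch above, with c_i = dist1 G (xs i) (zs i). *)
Definition staircase (R : realType) (m r : nat) (G : 'M[R[i]]_m) (kappa delta : R)
    (x0 : 'I_m) (xs zs : nat -> 'I_m) : Prop :=
  let d := dist1 G in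
  [/\ forall i, (i < r)%N -> d (xs i) x0 < delta /\ d (zs i) x0 < delta,
      forall i j, (i < r)%N -> (j < r)%N -> d (xs i) (xs j) < delta,
      forall i j, (j < i < r)%N -> d (zs i) (xs j) < delta,
      forall i j, (i < j < r)%N ->
        d (zs i) (xs j) <= d (xs i) (zs i) /\ d (zs i) (zs j) <= d (xs i) (zs i) &
      forall i, (i < r)%N -> kappa <= d (xs i) (zs i)].

Section Staircase.
Variables (R : realType) (m r : nat) (G : 'M[R[i]]_m) (kappa delta : R).
Variables (x0 : 'I_m) (xs zs : nat -> 'I_m).
Local Notation d := (dist1 G).

Hypothesis d_sym : forall p q, d p q = d q p.
Hypothesis G_diag : forall p, G p p = 1.
Hypothesis kappa_gt0 : 0 < kappa.
Hypothesis delta_gt0 : 0 < delta.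
Hypothesis delta_small : (kappa + 8 * (2 ^+ r) ^+ 2) * delta < kappa.
Hypothesis frame : staircase r G kappa delta x0 xs zs.

Let c i := d (xs i) (zs i).

Let xs_x0 i : (i < r)%N -> d (xs i) x0 < delta.
Proof. by case: frame => + _ _ _ _ => /[apply] -[]. Qed.
Let zs_x0 i : (i < r)%N -> d (zs i) x0 < delta.
Proof. by case: frame => + _ _ _ _ => /[apply] -[]. Qed.
Let xs_xs i j : (i < r)%N -> (j < r)%N -> d (xs i) (xs j) < delta.
Proof. by case: frame => _ + _ _ _; apply. Qed.
Let zs_xs_lt i j : (j < i < r)%N -> d (zs i) (xs j) < delta.
Proof. by case: frame => _ _ + _ _; apply. Qed.
Let zs_xs_gt i j : (i < j < r)%N -> d (zs i) (xs j) <= c i.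
Proof. by case: frame => _ _ _ + _ => /[apply] -[]. Qed.
Let zs_zs_gt i j : (i < j < r)%N -> d (zs i) (zs j) <= c i.
Proof. by case: frame => _ _ _ + _ => /[apply] -[]. Qed.
Let c_ge i : (i < r)%N -> kappa <= c i.
Proof. by case: frame => _ _ _ _; apply. Qed.

Section Dependence.
Variables (a : R[i]) (b e : nat -> R[i]).
Hypothesis rows_dep : forall q,
  a * G x0 q + \sum_(0 <= i < r) b i * G (xs i) q + \sum_(0 <= i < r) e i * G (zs i) q = 0.

Let nb i := cabs (b i).
Let ne i := cabs (e i).
Let NB := \sum_(0 <= i < r) nb i.
Let NE := \sum_(0 <= i < r) ne i.
Let N := cabs a + NB + NE.
Let s := a + \sum_(0 <= i < r) (b i + e i).
Let t q i := b i * (G (xs i) q - 1) + e i * (G (zs i) q - 1).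

Let d_diag p : d p p = 0 := dist1_diag (G_diag p).

Let nb_ge0 i : 0 <= nb i. Proof. exact: cabs_ge0. Qed.
Let ne_ge0 i : 0 <= ne i. Proof. exact: cabs_ge0. Qed.
Let NB_ge0 : 0 <= NB. Proof. exact: sumr_ge0. Qed.
Let NE_ge0 : 0 <= NE. Proof. exact: sumr_ge0. Qed.
Let N_ge0 : 0 <= N. Proof. by rewrite !addr_ge0 ?cabs_ge0. Qed.

Let c_gt0 i : (i < r)%N -> 0 < c i.
Proof. by move=> /c_ge; apply: lt_le_trans. Qed.

(* Rewriting [G p q] as [1 + (G p q - 1)] separates the sum [s] of all
   coefficients from terms that are small whenever [p] and [q] are close. *)
Lemma rows_dep_centered q : s + (a * (G x0 q - 1) + \sum_(0 <= i < r) t q i) = 0.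
Proof.
rewrite -[RHS](rows_dep q) -[in RHS]addrA -[in RHS]big_split /=.
have -> : \sum_(0 <= i < r) (b i * G (xs i) q + e i * G (zs i) q) =
          \sum_(0 <= i < r) (b i + e i) + \sum_(0 <= i < r) t q i.
  by rewrite -big_split; apply: eq_bigr => i _ /=; rewrite /t; ring.
rewrite /s; ring.
Qed.

Lemma cabs_t_le q i : cabs (t q i) <= nb i * d (xs i) q + ne i * d (zs i) q.
Proof. by rewrite /t; apply: le_trans (cabsD _ _) _; rewrite !cabsM. Qed.

Lemma cabs_coef_sum_le : cabs s <= delta * N.
Proof.
have /eqP := rows_dep_centered x0; rewrite addr_eq0 => /eqP->.
rewrite cabsN; apply: le_trans (cabsD _ _) _.
rewrite cabsM [cabs (G x0 x0 - 1)]d_diag mulr0 add0r.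
apply: le_trans (cabs_sum_le (g := fun i => delta * (nb i + ne i)) _) _.
  move=> i; rewrite mem_index_iota => /andP[_ lt_ir] _.
  apply: le_trans (cabs_t_le _ _) _; rewrite mulrDr ![delta * _]mulrC.
  by apply: lerD; apply: ler_wpM2l; rewrite // ltW ?xs_x0 ?zs_x0.
by rewrite -mulr_sumr big_split /= /N -addrA ler_pM2l // lerDr cabs_ge0.
Qed.

Lemma cabs_t_le_isolate j q (beta : nat -> R) : (j < r)%N -> 0 <= beta j ->
  (forall i, (i < r)%N -> i != j -> nb i * d (xs i) q + ne i * d (zs i) q <= beta i) ->
  cabs (t q j) <= cabs s + cabs a * d x0 q + \sum_(0 <= i < r) beta i.
Proof.
move=> lt_jr beta_j hbeta.
have jr : j \in index_iota 0 r by rewrite mem_index_iota.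
have /eqP := rows_dep_centered q.
rewrite (bigD1_seq j) ?iota_uniq //= (bigD1_seq j (F := beta)) ?iota_uniq //=.
rewrite addrCA addrA addrCA addr_eq0 => /eqP->; rewrite cabsN.
set S := \sum_(i <- _ | _) t q i; set B := \sum_(i <- _ | _) beta i.
have S_le : cabs S <= B.
  apply: cabs_sum_le => i; rewrite mem_index_iota => /andP[_ lt_ir] ij.
  exact: le_trans (cabs_t_le _ _) (hbeta i lt_ir ij).
have := cabsD (a * (G x0 q - 1) + s) S; have := cabsD (a * (G x0 q - 1)) s.
rewrite cabsM -[cabs (G x0 q - 1)]/(d x0 q); lra.
Qed.

Let u i := ne i * c i.
Let U := \sum_(0 <= i < r) u i.

Let U_ge0 : 0 <= U.
Proof.
rewrite /U big_nat_cond; apply: sumr_ge0 => i /andP[/andP[_ /c_gt0 ci] _].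
exact: mulr_ge0 (ne_ge0 i) (ltW ci).
Qed.

Lemma zs_coef_le j : (j < r)%N -> u j <= 2 * (delta * N) + \sum_(0 <= i < j) u i.
Proof.
move=> lt_jr.
(* At column [xs j] only the rows [zs i] with [i < j] can be far from 1. *)
pose beta i := delta * (nb i + ne i) + (if (i < j)%N then u i else 0).
have beta_j : 0 <= beta j.
  by rewrite /beta ltnn addr0 (mulr_ge0 (ltW delta_gt0) (addr_ge0 (nb_ge0 j) (ne_ge0 j))).
have tj : cabs (t (xs j) j) = u j.
  by rewrite /t G_diag subrr mulr0 add0r cabsM -[cabs (G _ _ - 1)]/(d _ _) d_sym.
have hbeta i : (i < r)%N -> i != j ->
    nb i * d (xs i) (xs j) + ne i * d (zs i) (xs j) <= beta i.
  move=> lt_ir ij; have ne_i := ne_ge0 i.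
  have := ler_wpM2l (nb_ge0 i) (ltW (xs_xs lt_ir lt_jr)).
  rewrite /beta; case: ltnP => [lt_ij | le_ji].
    have := ler_wpM2l ne_i (zs_xs_gt (i := i) (j := j) _); rewrite lt_ij lt_jr => /(_ isT).
    have := mulr_ge0 (ltW delta_gt0) ne_i; rewrite /u; lra.
  have lt_ji : (j < i)%N by rewrite ltn_neqAle eq_sym ij.
  have := ler_wpM2l ne_i (ltW (zs_xs_lt (i := i) (j := j) _)); rewrite lt_ji lt_ir => /(_ isT).
  lra.
have := cabs_t_le_isolate lt_jr beta_j hbeta; rewrite tj => /le_trans; apply.
rewrite big_split /= -mulr_sumr big_split /= -big_mkcond (big_nat_widen _ _ _ _ _ (ltnW lt_jr)) /=.
have := cabs_coef_sum_le; have := ler_wpM2l (cabs_ge0 a) (ltW (xs_x0 lt_jr)).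
rewrite d_sym /N -/NB -/NE; lra.
Qed.

Lemma xs_coef_le j : (j < r)%N ->
  kappa * nb j <= 2 * (delta * N) + U + kappa * NE + \sum_(j.+1 <= i < r) kappa * nb i.
Proof.
move=> lt_jr; have cj := ltW (c_gt0 lt_jr); have d0 := ltW delta_gt0.
(* At column [zs j] the rows with index [i < j] stay within [delta] or [c i],
   those with [i > j] within [c j]. *)
pose beta i := delta * nb i + u i + c j * ne i + (if (j < i)%N then c j * nb i else 0).
have beta_j : 0 <= beta j.
  by rewrite /beta ltnn addr0 /u !addr_ge0 ?mulr_ge0.
have tj : cabs (t (zs j) j) = nb j * c j.
  by rewrite /t G_diag subrr mulr0 addr0 cabsM -[cabs (G _ _ - 1)]/(d _ _).
have hbeta i : (i < r)%N -> i != j ->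
    nb i * d (xs i) (zs j) + ne i * d (zs i) (zs j) <= beta i.
  move=> lt_ir ij; have [nb_i ne_i] := (nb_ge0 i, ne_ge0 i).
  have u_i : 0 <= u i by rewrite mulr_ge0 // ltW // c_gt0.
  rewrite /beta [d (xs i) _]d_sym; case: ltnP => [lt_ji | le_ij].
    have := ler_wpM2l nb_i (zs_xs_gt (i := j) (j := i) _); rewrite lt_ji lt_ir => /(_ isT).
    have := ler_wpM2l ne_i (zs_zs_gt (i := j) (j := i) _); rewrite lt_ji lt_ir => /(_ isT).
    rewrite d_sym; have := mulr_ge0 d0 nb_i; lra.
  have lt_ij : (i < j)%N by rewrite ltn_neqAle ij.
  have := ler_wpM2l nb_i (ltW (zs_xs_lt (i := j) (j := i) _)); rewrite lt_ij lt_jr => /(_ isT).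
  have := ler_wpM2l ne_i (zs_zs_gt (i := i) (j := j) _); rewrite lt_ij lt_jr => /(_ isT).
  have := mulr_ge0 cj ne_i; rewrite /u; lra.
have := cabs_t_le_isolate lt_jr beta_j hbeta; rewrite tj.
rewrite !big_split /= -!mulr_sumr -big_mkcond -/U.
set Q := \sum_(j.+1 <= i < r) nb i.
have -> : \sum_(0 <= i < r | (j < i)%N) c j * nb i = c j * Q.
  by rewrite /Q mulr_sumr (big_nat_widenl _ _ _ _ _ (leq0n j.+1)).
move=> hb.
have {}hb : nb j * c j <= 2 * (delta * N) + U + c j * (NE + Q).
  have := cabs_coef_sum_le; have := ler_wpM2l (cabs_ge0 a) (ltW (zs_x0 lt_jr)).
  rewrite d_sym /N -/NB -/NE in hb *; have := mulr_ge0 d0 NE_ge0; lra.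
(* Trade the factor [c j] for the smaller [kappa] without dividing. *)
have X_ge0 : 0 <= 2 * (delta * N) + U by rewrite addr_ge0 ?mulr_ge0.
have [le_nbj | lt_nbj] := lerP (nb j) (NE + Q).
  have := ler_wpM2l (ltW kappa_gt0) le_nbj; lra.
have excess : 0 <= nb j - (NE + Q) by rewrite subr_ge0 ltW.
have := ler_wpM2l excess (c_ge lt_jr); lra.
Qed.

Lemma rows_dep_coef_eq0 :
  cabs a + \sum_(0 <= i < r) cabs (b i) + \sum_(0 <= i < r) cabs (e i) = 0.
Proof.
pose D := delta * N; pose p : R := 2 ^+ r.
have p_ge1 : 1 <= p by rewrite exprn_ege1 // ler1n.
have D_ge0 : 0 <= D by rewrite mulr_ge0 // ltW.
have hU : U <= (p - 1) * (2 * D) := sum_le_geometric zs_coef_le.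
have hNE : kappa * NE <= U.
  rewrite /NE mulr_sumr; apply: ler_sum_nat => i /andP[_ lt_ir].
  by rewrite /u mulrC ler_wpM2l ?c_ge.
have hNB : kappa * NB <= (p - 1) * (2 * D + U + kappa * NE).
  by rewrite /NB mulr_sumr; apply: sum_le_geometric_rev xs_coef_le.
have ha : cabs a <= D + NB + NE.
  have -> : a = s - \sum_(0 <= i < r) (b i + e i) by rewrite /s addrK.
  have := cabsD s (- \sum_(0 <= i < r) (b i + e i)); rewrite cabsN.
  have : cabs (\sum_(0 <= i < r) (b i + e i)) <= NB + NE.
    by rewrite /NB /NE -big_split; apply: cabs_sum_le => i _ _; apply: cabsD.
  have := cabs_coef_sum_le; rewrite -/D; lra.
have hN : kappa * N <= (kappa + 8 * p ^+ 2) * D.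
  have pm1 : 0 <= p - 1 by rewrite subr_ge0.
  have := ler_wpM2l (ltW kappa_gt0) ha.
  have := ler_wpM2l pm1 hNE; have := ler_wpM2l pm1 hU.
  have := mulr_ge0 (le_trans ler01 p_ge1) D_ge0.
  rewrite /N; nra.
apply/eqP; rewrite -/NB -/NE -/N eq_le N_ge0 andbT.
have gap : 0 < kappa - (kappa + 8 * p ^+ 2) * delta by rewrite subr_gt0.
rewrite -(pmulr_rle0 _ gap); rewrite /D in hN; nra.
Qed.

End Dependence.

Lemma staircase_rank : (2 * r < \rank G)%N.
Proof.
rewrite ltnNge; apply/negP => rkG.
pose f k := if k == 0%N then x0 else if (k <= r)%N then xs k.-1 else zs (k - r.+1).
have lt_rk : (\rank G < 1 + r + r)%N by lia.
have [y [k lt_k yk_neq0] dep] := rows_dependent f lt_rk.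
have := @rows_dep_coef_eq0 (y 0%N) (fun i => y i.+1) (fun i => y (r + i).+1).
rewrite -(sum_split3 r (fun k => cabs (y k))) => norms0.
have {}norms0 : \sum_(0 <= k < 1 + r + r) cabs (y k) = 0.
  apply: norms0 => q; rewrite -[RHS](dep q) sum_split3 /f /=.
  congr (_ + _ + _); apply: eq_big_nat => i /andP[_ lt_ir].
    by rewrite lt_ir.
  by rewrite ltnNge leq_addr /= subSS addKn.
move/eqP: norms0; rewrite (bigD1_seq k) ?mem_index_iota ?iota_uniq //=.
rewrite paddr_eq0 ?cabs_ge0 ?sumr_ge0 // => [/andP[/eqP/cabs_eq0 yk _]|i _].
  by rewrite yk eqxx in yk_neq0.
exact: cabs_ge0.
Qed.

End Staircase.

Section CliqueComplex.
Variables (R : realType) (m : nat) (G : 'M[R[i]]_m) (kappa : R).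
Local Notation K := (inK G kappa).
Implicit Types (s t : {set 'I_m}) (u v : 'I_m).

Lemma inK_subset s t : K s -> t \subset s -> t != set0 -> K t.
Proof.
case/andP=> _ /forallP Ks ts t_neq0; rewrite /inK t_neq0 /=.
apply/forallP => u; apply/implyP => ut; apply/forallP => v; apply/implyP => vt.
by have /implyP/(_ (subsetP ts _ ut))/forallP/(_ v)/implyP := Ks u; apply; apply: (subsetP ts).
Qed.

Lemma inK_dist_lt s u v : K s -> u \in s -> v \in s -> u != v -> dist1 G u v < kappa.
Proof.
case/andP=> _ /forallP Ks us vs uv.
by have /implyP/(_ us)/forallP/(_ v)/implyP/(_ vs)/implyP := Ks u; apply.
Qed.

Lemma inK_setU1 s v : K s ->
  (forall u, u \in s -> u != v -> dist1 G u v < kappa /\ dist1 G v u < kappa) ->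
  K (v |: s).
Proof.
move=> Ks hv; apply/andP; split; first by apply/set0Pn; exists v; rewrite setU11.
apply/forallP => x; apply/implyP; rewrite in_setU1 => hx.
apply/forallP => y; apply/implyP; rewrite in_setU1 => hy; apply/implyP.
case/orP: hx => [/eqP-> | xs]; case/orP: hy => [/eqP-> | ys] xy.
- by rewrite eqxx in xy.
- by have [] := hv y ys; rewrite // eq_sym.
- by have [] := hv x xs xy.
- exact: inK_dist_lt Ks xs ys xy.
Qed.

Section ConstructedOrder.
Variable ord : rel {set 'I_m}.
Hypothesis ord_constructed : constructed_order G kappa ord.
Local Notation mu := (mu ord).
Local Notation V := (Vset G kappa ord).

Let ord_irr : forall s, K s -> ~~ ord s s := ord_constructed.1.
Let ord_trans : forall s1 s2 s3, K s1 -> K s2 -> K s3 ->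
  ord s1 s2 -> ord s2 s3 -> ord s1 s3 :=
  ord_constructed.2.1.
Let ord_total : forall s t, K s -> K t -> s != t -> ord s t || ord t s :=
  ord_constructed.2.2.1.
Let ord_mu : forall s t, K s -> K t -> #|s| = #|t| -> (1 < #|s|)%N ->
  ord (mu s) (mu t) -> ord s t := ord_constructed.2.2.2.2.1.
Let ord_greedy := ord_constructed.2.2.2.2.2.

Lemma ord_asym s t : K s -> K t -> ord s t -> ~~ ord t s.
Proof.
by move=> Ks Kt st; apply/negP => /(ord_trans Ks Kt Ks st); apply/negP/ord_irr.
Qed.

Lemma inVset s v : (v \in V s) = [&& v \notin s, K (v |: s) & mu (v |: s) == s].
Proof. by rewrite inE andbA. Qed.

Lemma facets_inK s : K s -> (1 < #|s|)%N -> {in facets s, forall f, K f}.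
Proof.
move=> Ks s_gt1 _ /imsetP[x xs ->]; apply: inK_subset Ks (subD1set s x) _.
by rewrite -card_gt0 (cardsD1 x s) xs in s_gt1 *.
Qed.

Lemma mu_max s : K s -> (1 < #|s|)%N ->
  mu s \in facets s /\ forall f, f \in facets s -> (f == mu s) || ord (mu s) f.
Proof.
move=> Ks s_gt1; have [x xs] : exists x, x \in s.
  by apply/set0Pn; rewrite -card_gt0 ltnW.
have facets_neq0 : enum (facets s) != [::].
  have : s :\ x \in enum (facets s) by rewrite mem_enum; apply/imsetP; exists x.
  by case: (enum _).
have facets_K : all K (enum (facets s)).
  by apply/allP => f; rewrite mem_enum; apply: facets_inK.
have [f] := ex_max_seq ord_trans ord_total facets_neq0 facets_K.
rewrite mem_enum => fs f_max; rewrite /mu; case: pickP => [g /andP[gs /forallP g_max] | ].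
  by split=> // h hs; have /implyP := g_max h; apply.
move=> /(_ f); rewrite fs /=; case/forallP => h; apply/implyP => hs.
by rewrite f_max ?mem_enum.
Qed.

Lemma mu_setU1 s : K s -> (1 < #|s|)%N -> exists2 x, x \in V (mu s) & s = x |: mu s.
Proof.
move=> Ks s_gt1; have [/imsetP[x xs mu_s] _] := mu_max Ks s_gt1.
exists x; last by rewrite mu_s setD1K.
by rewrite inVset mu_s setD11 setD1K // Ks -mu_s eqxx.
Qed.

Lemma mu_card s : K s -> (1 < #|s|)%N -> K (mu s) /\ #|s| = #|mu s|.+1.
Proof.
move=> Ks s_gt1; have [x] := mu_setU1 Ks s_gt1; rewrite inVset => /andP[x_mus _] s_eq.
have card_s : #|s| = #|mu s|.+1 by rewrite {1}s_eq cardsU1 x_mus.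
split=> //; apply: inK_subset Ks _ _; first by rewrite {2}s_eq subsetU1.
by rewrite -card_gt0 -ltnS -card_s.
Qed.

Lemma Vset_mu s p : K s -> (1 < #|s|)%N -> p \in V s ->
  p \in V (mu s) /\ ~~ ord (p |: mu s) s.
Proof.
move=> Ks s_gt1; rewrite inVset => /and3P[ps Kps /eqP mu_ps].
have [x] := mu_setU1 Ks s_gt1; rewrite inVset => /andP[x_mus _] s_eq.
have [_ card_s] := mu_card Ks s_gt1.
have px : p != x by apply: contraNneq ps => ->; rewrite s_eq setU11.
have p_mus : p \notin mu s by apply: contra ps; rewrite {2}s_eq => /setU1r.
have K_pmus : K (p |: mu s).
  apply: inK_subset Kps _ _; first by rewrite {2}s_eq setUS // subsetU1.
  by apply/set0Pn; exists p; rewrite setU11.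
have card_pmus : #|p |: mu s| = #|s| by rewrite cardsU1 p_mus card_s.
have facet_eq : (p |: s) :\ x = p |: mu s.
  by rewrite {1}s_eq setUCA setU1K // in_setU1 eq_sym (negbTE px).
(* [p |: mu s] is a facet of [p |: s] other than its top facet [s]. *)
have ord_s : ord s (p |: mu s).
  have ps_gt1 : (1 < #|p |: s|)%N by rewrite cardsU1 ps ltnW.
  have xps : (p |: s) :\ x \in facets (p |: s).
    by apply/imsetP; exists x; rewrite // s_eq !in_setU1 eqxx orbT.
  have [_ /(_ _ xps)] := mu_max Kps ps_gt1.
  rewrite mu_ps facet_eq => /orP[/eqP e | //].
  by move: ps; rewrite -e setU11.
have not_ord := ord_asym Ks K_pmus ord_s.
split=> //; rewrite inVset p_mus K_pmus /=.
have pmus_gt1 : (1 < #|p |: mu s|)%N by rewrite card_pmus.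
have mus_facet : mu s \in facets (p |: mu s).
  by apply/imsetP; exists p; rewrite ?setU11 ?setU1K.
(* Otherwise the top facet of [p |: mu s] is above [mu s], which lifts to
   [p |: mu s] being above [s]. *)
have [_ /(_ _ mus_facet)/orP[e | ord_mu_mu]] := mu_max K_pmus pmus_gt1.
  by rewrite eq_sym.
by rewrite (ord_mu K_pmus Ks card_pmus pmus_gt1 ord_mu_mu) in not_ord.
Qed.

Lemma mu_subset s : K s -> (1 < #|s|)%N -> mu s \subset s.
Proof. by move=> Ks /(mu_setU1 Ks)[x _ {2}->]; apply: subsetU1. Qed.

Lemma iter_mu_card s k : K s -> (k < #|s|)%N ->
  K (iter k mu s) /\ #|iter k mu s| = (#|s| - k)%N.
Proof.
move=> Ks; elim: k => [|k IH] lt_ks; first by rewrite subn0.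
have [Kk card_k] := IH (ltnW lt_ks).
have [Kmu card_mu] := mu_card Kk (ltac:(lia) : (1 < #|iter k mu s|)%N).
by split=> //=; rewrite subnS -card_k card_mu.
Qed.

Lemma iter_mu_subset s a b : K s -> (a <= b < #|s|)%N -> iter b mu s \subset iter a mu s.
Proof.
move=> Ks; elim: b => [|b IH] /andP[le_ab lt_bs].
  by move: le_ab; rewrite leqn0 => /eqP->.
have [-> // | lt_ab] := eqVneq a b.+1.
have [Kb card_b] := iter_mu_card Ks (ltnW lt_bs).
apply: subset_trans (mu_subset Kb _) (IH _); first by rewrite card_b; lia.
by rewrite (ltnW lt_bs) andbT; lia.
Qed.

Lemma Vset_iter_mu s p k : K s -> p \in V s -> (k < #|s|)%N ->
  p \in V (iter k mu s) /\ ((0 < k)%N -> ~~ ord (p |: iter k mu s) (iter k.-1 mu s)).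
Proof.
move=> Ks ps; elim: k => [|k IH] lt_ks; first by [].
have [Kk card_k] := iter_mu_card Ks (ltnW lt_ks).
have [pk _] := IH (ltnW lt_ks).
by have [] := Vset_mu Kk (ltac:(lia) : (1 < #|iter k mu s|)%N) pk.
Qed.

Section Siblings.
Variables (delta : R) (r : nat) (rho : {set 'I_m}) (v w : 'I_m).
Hypothesis G_diag : forall p, G p p = 1.
Hypothesis delta_gt0 : 0 < delta.
Hypothesis close : forall p q, dist1 G p q < kappa -> dist1 G p q < delta.
Hypothesis card_rho : #|rho| = r.
Hypotheses (v_rho : v \in V rho) (w_rho : w \in V rho) (vw : v != w).
Hypothesis w_below : ~~ ord (w |: rho) (v |: rho).
Hypothesis far : kappa < dist1 G v w.

Let F i := iter (r - i) mu (v |: rho).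

Let sg_inK : K (v |: rho).
Proof. by move: v_rho; rewrite inVset => /and3P[]. Qed.

Let card_sg : #|v |: rho| = r.+1.
Proof. by move: v_rho; rewrite inVset cardsU1 card_rho => /and3P[->]. Qed.

Let F_pred : (0 < r)%N -> F r.-1 = rho.
Proof.
move=> r_gt0; rewrite /F; have -> : (r - r.-1 = 1)%N by lia.
by move: v_rho; rewrite inVset => /and3P[_ _ /eqP].
Qed.

Lemma F_inK i : (i <= r)%N -> K (F i) /\ #|F i| = i.+1.
Proof.
move=> le_ir; have [KF ->] := iter_mu_card sg_inK (ltac:(lia) : (r - i < #|v |: rho|)%N).
by split=> //; rewrite card_sg; lia.
Qed.

Lemma F_subset i j : (i <= j <= r)%N -> F i \subset F j.
Proof. by move=> hij; apply: iter_mu_subset sg_inK _; rewrite card_sg; lia. Qed.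

Lemma F_Vset i j p : (i < j <= r)%N -> p \in V (F j) ->
  p \in V (F i) /\ ~~ ord (p |: F i) (F i.+1).
Proof.
move=> hij pj; have [KFj card_Fj] := F_inK (ltac:(lia) : (j <= r)%N).
have [] := Vset_iter_mu KFj pj (ltac:(lia) : (j - i < #|F j|)%N).
have e1 : (j - i + (r - j) = r - i)%N by lia.
have e2 : ((j - i).-1 + (r - j) = r - i.+1)%N by lia.
rewrite /F -!iterD e1 e2 => -> below; split=> //; apply: below; lia.
Qed.

Let Rs i := [set p in V (F i) | ~~ ord (p |: F i) (F i.+1)].

Let inRs i p : (p \in Rs i) = (p \in V (F i)) && ~~ ord (p |: F i) (F i.+1).
Proof. by rewrite in_set. Qed.

Lemma v_w_Rs i : (i < r)%N -> v \in Rs i /\ w \in Rs i.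
Proof.
move=> lt_ir; have r_gt0 : (0 < r)%N by lia.
have F_top : F (r.-1).+1 = v |: rho by rewrite prednK // /F subnn.
have [v_top w_top] : v \in Rs r.-1 /\ w \in Rs r.-1.
  by rewrite !inRs F_pred // F_top v_rho w_rho w_below ord_irr.
have [-> // | i_neq] := eqVneq i r.-1.
by split; rewrite inRs; apply/andP; apply: (@F_Vset i r.-1); rewrite ?F_pred //; lia.
Qed.

Section Frame.
Variables (x0 : 'I_m) (xs zs : nat -> 'I_m).
Hypothesis F_0 : F 0 = [set x0].
Hypothesis xs_spec : forall i, (i < r)%N -> xs i \in V (F i) /\ F i.+1 = xs i |: F i.
Hypothesis zs_spec : forall i, (i < r)%N -> [/\ zs i \in Rs i, zs i != xs i &
  forall p q, p \in Rs i -> q \in Rs i -> p != q -> dist1 G p q <= dist1 G (xs i) (zs i)].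

Let close_in S p q : K S -> p \in S -> q \in S -> dist1 G p q < delta.
Proof.
move=> KS pS qS; have [-> | pq] := eqVneq p q; first by rewrite dist1_diag.
exact/close/(inK_dist_lt KS).
Qed.

Let x0_F i : (i <= r)%N -> x0 \in F i.
Proof. by move=> le_ir; apply: (subsetP (@F_subset 0 i le_ir)); rewrite F_0 set11. Qed.

Let xs_F i j : (j < i <= r)%N -> xs j \in F i.
Proof.
move=> hji; have [_ F_j1] := xs_spec (ltac:(lia) : (j < r)%N).
by apply: (subsetP (@F_subset j.+1 i hji)); rewrite F_j1 setU11.
Qed.

Let K_zs i : (i < r)%N -> K (zs i |: F i).
Proof. by case/zs_spec; rewrite inRs inVset => /andP[/and3P[]]. Qed.

Let Rs_later i j p : (i < j < r)%N -> p \in V (F j) -> p \in Rs i.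
Proof. by move=> hij /(@F_Vset i j) [] //; [lia | rewrite inRs => -> ->]. Qed.

Let Rs_far i p q : (i < r)%N -> p \in Rs i -> q \in Rs i ->
  dist1 G p q <= dist1 G (xs i) (zs i).
Proof.
move=> lt_ir pR qR; have [-> | pq] := eqVneq p q; last by case: (zs_spec lt_ir) => _ _; apply.
by rewrite dist1_diag // cabs_ge0.
Qed.

Lemma frame_staircase : staircase r G kappa delta x0 xs zs.
Proof.
have [KFr _] := F_inK (leqnn r).
split.
- move=> i lt_ir; split; first by apply: (close_in KFr); rewrite ?xs_F ?x0_F //; lia.
  by apply: (close_in (K_zs lt_ir)); rewrite ?setU11 // setU1r // x0_F // ltnW.
- by move=> i j lt_ir lt_jr; apply: (close_in KFr); rewrite xs_F //; lia.
- move=> i j hji; have lt_ir : (i < r)%N by lia.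
  by apply: (close_in (K_zs lt_ir)); rewrite ?setU11 // setU1r // xs_F //; lia.
- move=> i j hij; have [lt_ir lt_jr] : (i < r)%N /\ (j < r)%N by lia.
  have [zsR _ _] := zs_spec lt_ir.
  have [zsjR _ _] := zs_spec lt_jr; rewrite inRs in zsjR; case/andP: zsjR => zsjV _.
  by split; apply: Rs_far; rewrite // (Rs_later hij) // (xs_spec lt_jr).1.
- move=> i lt_ir; have [vR wR] := v_w_Rs lt_ir.
  exact: ltW (lt_le_trans far (Rs_far lt_ir vR wR)).
Qed.

End Frame.

Lemma siblings_staircase : exists x0 xs zs, staircase r G kappa delta x0 xs zs.
Proof.
have [_ /eqP/cards1P[x0 F_0]] := F_inK (leq0n r).
have xs_ex i : (i < r)%N -> exists x, (x \in V (F i)) && (F i.+1 == x |: F i).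
  move=> lt_ir; have [KF1 card_F1] := F_inK lt_ir.
  have [x xV F1_eq] := mu_setU1 KF1 (ltac:(lia) : (1 < #|F i.+1|)%N).
  by exists x; rewrite /F -(subnSK lt_ir) /= -/(F i.+1) xV -F1_eq eqxx.
have [xs xs_spec] := fin_all_exists_ltn x0 xs_ex.
have zs_ex i : (i < r)%N -> exists z, [&& z \in Rs i, z != xs i &
    [forall p in Rs i, forall q in Rs i, (p != q) ==> (dist1 G p q <= dist1 G (xs i) z)]].
  move=> lt_ir; have /andP[xsV /eqP F1_eq] := xs_spec i lt_ir.
  have [KF _] := F_inK (ltnW lt_ir).
  have Rs_eq : [set p in V (F i) | ~~ ord (p |: F i) (xs i |: F i)] = Rs i.
    by rewrite /Rs F1_eq.
  have Rs_gt1 : (1 < #|[set p in V (F i) | ~~ ord (p |: F i) (xs i |: F i)]|)%N.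
    rewrite Rs_eq; have [vR wR] := v_w_Rs lt_ir.
    have : [set v; w] \subset Rs i by apply/subsetP => p /set2P[]->.
    by move/subset_leq_card; rewrite cards2 vw.
  have [z] := ord_greedy KF xsV Rs_gt1.
  rewrite Rs_eq => zR [zx z_max]; exists z; rewrite zR zx /=.
  apply/forallP => p; apply/implyP => pR; apply/forallP => q; apply/implyP => qR.
  by apply/implyP; apply: z_max.
have [zs zs_spec] := fin_all_exists_ltn x0 zs_ex.
exists x0, xs, zs; apply: frame_staircase => // i lt_ir.
  by have /andP[-> /eqP] := xs_spec i lt_ir.
have /and3P[zR zx /forallP z_max] := zs_spec i lt_ir; split=> // p q pR qR.
by have /implyP/(_ pR)/forallP/(_ q)/implyP/(_ qR)/implyP := z_max p.
Qed.

End Siblings.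

End ConstructedOrder.

End CliqueComplex.

Lemma gap_scale_small (R : realFieldType) (r : nat) (kappa : R) :
  0 < kappa -> kappa < 1 ->
  (kappa + 8 * (2 ^+ r) ^+ 2) * (kappa / 2 ^+ (4 * r.+1)) < kappa.
Proof.
move=> k0 k1; set p : R := 2 ^+ r.
have p_ge1 : 1 <= p by rewrite exprn_ege1 // ler1n.
have -> : 2 ^+ (4 * r.+1) = 16 * (p ^+ 2) ^+ 2 :> R.
  have -> : (4 * r.+1 = 4 + r * 2 * 2)%N by lia.
  by rewrite exprD -natrX !exprM.
have D_gt0 : 0 < 16 * (p ^+ 2) ^+ 2 by rewrite mulr_gt0 ?exprn_gt0 // (lt_le_trans ltr01).
rewrite mulrA ltr_pdivrMr // mulrC ltr_pM2l //.
have p2_ge1 : 1 <= p ^+ 2 by rewrite exprn_ege1.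
have := ler_wpM2l (le_trans ler01 p2_ge1) p2_ge1; nra.
Qed.

Lemma siblings_dist_lt (R : realType) (m r : nat) (G : 'M[R[i]]_m) (kappa : R)
    (ord : rel {set 'I_m}) (rho : {set 'I_m}) (v w : 'I_m) :
  (forall p q, dist1 G p q = dist1 G q p) ->
  (forall p, G p p = 1) ->
  (\rank G <= 2 * r)%N ->
  0 < kappa -> kappa < 1 ->
  (forall p q, kappa < dist1 G p q \/ dist1 G p q < kappa / 2 ^+ (4 * r.+1)) ->
  constructed_order G kappa ord ->
  #|rho| = r -> v \in Vset G kappa ord rho -> w \in Vset G kappa ord rho -> v != w ->
  dist1 G v w < kappa.
Proof.
move=> d_sym G_diag rkG k0 k1 gap co card_rho v_rho w_rho vw.
pose delta := kappa / 2 ^+ (4 * r.+1).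
have delta_gt0 : 0 < delta by rewrite divr_gt0 ?exprn_gt0.
have delta_small := gap_scale_small r k0 k1.
have delta_lt : delta < kappa.
  by rewrite ltr_pdivrMr ?exprn_gt0 // ltr_pMr // exprn_egt1 // ltr1n.
have close p q : dist1 G p q < kappa -> dist1 G p q < delta.
  by case: (gap p q) => // /lt_trans/[apply]; rewrite ltxx.
suff not_far : ~ kappa < dist1 G v w.
  by case: (gap v w) => // /lt_trans; apply.
wlog w_below : v w v_rho w_rho vw / ~~ ord (w |: rho) (v |: rho).
  move=> hwlog; have [wv | ] := boolP (ord (w |: rho) (v |: rho)); last exact: hwlog.
  rewrite d_sym; apply: hwlog; rewrite 1?eq_sym //.
  by move: v_rho w_rho; rewrite !inVset => /and3P[_ Kv _] /and3P[_ Kw _]; apply: (ord_asym co).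
move=> far.
have [x0 [xs [zs frame]]] :=
  siblings_staircase co G_diag delta_gt0 close card_rho v_rho w_rho vw w_below far.
by have := staircase_rank d_sym G_diag k0 delta_gt0 delta_small frame; lia.
Qed.

Theorem lemma10 (R : realType) (m r : nat) (G : 'M[R[i]]_m) (kappa : R)
    (ord : rel {set 'I_m}) :
  G^T = G ->
  (forall u, G u u = 1) ->
  (\rank G <= 2 * r)%N ->
  0 < kappa -> kappa < 1 ->
  (forall u v, kappa < dist1 G u v \/ dist1 G u v < kappa / 2 ^+ (4 * r.+1)) ->
  constructed_order G kappa ord ->
  forall sigma tau : {set 'I_m},
    inK G kappa sigma -> inK G kappa tau ->
    #|sigma| = r.+1 -> #|tau| = r.+1 ->
    mu ord sigma = mu ord tau ->
    inK G kappa (sigma :|: tau).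
Proof.
move=> GT G_diag rkG k0 k1 gap co sigma tau Ks Kt card_s card_t mu_st.
have d_sym p q : dist1 G p q = dist1 G q p by rewrite /dist1 -{1}GT mxE.
have r_gt0 : (0 < r)%N.
  rewrite lt0n; apply: contraTneq rkG => r0; rewrite r0 -ltnNge lt0n mxrank_eq0.
  have [v _] : exists v, v \in sigma by apply/set0Pn; rewrite -card_gt0 card_s.
  by apply: contra_neq (oner_neq0 R[i]) => G0; rewrite -(G_diag v) G0 mxE.
have [v v_rho sigma_eq] := mu_setU1 co Ks (ltac:(lia) : (1 < #|sigma|)%N).
have [w w_rho tau_eq] := mu_setU1 co Kt (ltac:(lia) : (1 < #|tau|)%N).
rewrite -mu_st in w_rho tau_eq; set rho := mu ord sigma in v_rho w_rho sigma_eq tau_eq.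
have sigma_gt1 : (1 < #|sigma|)%N by rewrite card_s ltnS.
have [_ card_sr] := mu_card co Ks sigma_gt1.
have card_rho : #|rho| = r by apply/eqP; rewrite -eqSS -card_sr card_s.
have -> : sigma :|: tau = w |: sigma.
  by rewrite tau_eq setUCA (setUidPl (mu_subset co Ks sigma_gt1)).
apply: inK_setU1 Ks _ => u; rewrite {1}sigma_eq in_setU1 => /orP[/eqP-> | u_rho] uw.
  have vw := siblings_dist_lt d_sym G_diag rkG k0 k1 gap co card_rho v_rho w_rho uw.
  by split; rewrite // d_sym.
by rewrite !(inK_dist_lt Kt) ?tau_eq ?setU11 ?setU1r // eq_sym.
Qed.
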